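(* Let $n\in\mathbb{N}$ and $\varepsilon\in(0,1]$. In the cumulative dual access model, any testing algorithm for uniformity over $[n]$ (i.e., for the property $\mathcal{P}=\{\mathcal{U}_n\}$, where $\mathcal{U}_n$ is the uniform distribution on $[n]$) with distance parameter $\varepsilon$ must have sample (query) complexity $\Omega(1/\varepsilon)$.
   Context: Distributions are over $[n]=\{1,\dots,n\}$. The total variation distance is $d_{TV}(D_1,D_2)=\frac12\sum_{i\in[n]}|D_1(i)-D_2(i)|$, and $d_{TV}(D,\mathcal{P})=\min_{D'\in\mathcal{P}}d_{TV}(D,D')$. In the cumulative dual access model, an algorithm accesses an unknown distribution $D$ via two oracles: a sampling oracle $\mathsf{SAMP}_D$ that returns $i\in[n]$ with probability $D(i)$, independently of all previous calls, and a cumulative evaluation oracle $\mathsf{CEVAL}_D$ that on query $j\in[n]$ returns $D([j])=\sum_{i=1}^j D(i)$. Each call to either oracle counts as one query. A $q$-query testing algorithm for $\mathcal{P}$ takes $n$, $\varepsilon\in(0,1]$ and oracle access to $D$, makes at most $q(\varepsilon,n)$ oracle calls, and outputs ACCEPT with probability at least $2/3$ if $D\in\mathcal{P}$ and REJECT with probability at least $2/3$ if $d_{TV}(D,\mathcal{P})\ge\varepsilon$. *)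

From HB Require Import structures.
From mathcomp Require Import all_boot all_order all_algebra.
From mathcomp Require Import reals.
Set Implicit Arguments. Unset Strict Implicit. Unset Printing Implicit Defensive.
Import Order.TTheory GRing.Theory Num.Theory.
Local Open Scope ring_scope.

(* A distribution over [n] = {1..n}, encoded on 'I_n = {0..n-1}
   (element i : 'I_n stands for i+1). *)
Definition is_distr (R : realType) (n : nat) (D : 'I_n -> R) : Prop :=
  (forall i, 0 <= D i) /\ \sum_(i < n) D i = 1.

Definition uniform (R : realType) (n : nat) : 'I_n -> R := fun _ => n%:R^-1.

Definition dTV (R : realType) (n : nat) (D1 D2 : 'I_n -> R) : R :=
  2^-1 * \sum_(i < n) `|D1 i - D2 i|.

Definition cdf (R : realType) (n : nat) (D : 'I_n -> R) (j : 'I_n) : R :=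
  \sum_(i < n | (i <= j)%N) D i.

(* A randomized adaptive algorithm in the cumulative dual access model,
   as a (possibly infinitely branching) decision tree:
   - Out b      : stop and output ACCEPT (b = true) or REJECT (b = false);
   - Samp k     : call SAMP_D, receive i, continue with k i;
   - Ceval j k  : call CEVAL_D on j, receive D([j]) = r, continue with k r;
   - Coin p a b : internal randomness: with probability p continue with a,
                  otherwise with b (no oracle call). *)
Inductive alg (R : Type) (n : nat) : Type :=
| Out of bool
| Samp of ('I_n -> alg R n)
| Ceval of 'I_n & (R -> alg R n)
| Coin of R & alg R n & alg R n.

Arguments Out {R n}.

Fixpoint acc_prob (R : realType) (n : nat) (D : 'I_n -> R) (A : alg R n) : R :=
  match A with
  | Out b => if b then 1 else 0
  | Samp k => \sum_(i < n) D i * acc_prob D (k i)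
  | Ceval j k => acc_prob D (k (cdf D j))
  | Coin p a b => p * acc_prob D a + (1 - p) * acc_prob D b
  end.

Inductive uses_at_most (R : realType) (n : nat) : alg R n -> nat -> Prop :=
| uam_out b q : uses_at_most (Out b) q
| uam_samp k q : (forall i, uses_at_most (k i) q) -> uses_at_most (Samp k) q.+1
| uam_ceval j k q : (forall r, uses_at_most (k r) q) -> uses_at_most (Ceval j k) q.+1
| uam_coin p a b q : 0 <= p <= 1 -> uses_at_most a q -> uses_at_most b q ->
    uses_at_most (Coin p a b) q.

(* A is a testing algorithm for uniformity over [n] with distance
   parameter eps: P = {U_n}; d_TV(D, P) = d_TV(D, U_n). *)
Definition uniformity_tester (R : realType) (n : nat) (eps : R) (A : alg R n) : Prop :=
  forall D : 'I_n -> R, is_distr D ->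
    ((D =1 @uniform R n) -> 2 / 3 <= acc_prob D A) /\
    (eps <= dTV D (@uniform R n) -> acc_prob D A <= 1 / 3).

(* Cut [n] into M ~ 1/(4 eps) blocks of width 2L ~ 2 eps n.  For each block,
   moving the uniform mass of its first half onto its second half yields a
   distribution at distance L/n >= eps from U_n that agrees with U_n, and with
   its cdf, outside the block.  A tester must tell it apart from U_n, so under
   U_n it must sample from or query the block with probability >= 1/3.  Every
   oracle call touches at most one block, so these M probabilities add up to
   at most q, whence q >= M/3 = Omega(1/eps). *)

From mathcomp Require Import all_boot all_order all_algebra.
From mathcomp Require Import reals lra ring zify.
Import Order.TTheory GRing.Theory Num.Theory.
Local Open Scope ring_scope.

Section Coupling.
Variable R : realType.

Fixpoint hit_prob {n : nat} (E : 'I_n -> R) (B : pred 'I_n) (A : alg R n) : R :=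
  match A with
  | Out _ => 0
  | Samp k => \sum_(i < n) E i * (if B i then 1 else hit_prob E B (k i))
  | Ceval j k => if B j then 1 else hit_prob E B (k (cdf E j))
  | Coin p a b => p * hit_prob E B a + (1 - p) * hit_prob E B b
  end.

Lemma acc_prob_ge0_le1 {n} {D : 'I_n -> R} {A q} : is_distr D ->
  uses_at_most A q -> 0 <= acc_prob D A <= 1.
Proof.
case=> D0 D1; elim=> {A q} /=.
- by case; rewrite lexx ler01.
- move=> k q _ IH; apply/andP; split.
    by apply: sumr_ge0 => i _; apply: mulr_ge0 => //; case/andP: (IH i).
  rewrite -D1; apply: ler_sum => i _; rewrite -[leRHS]mulr1.
  by apply: ler_wpM2l => //; case/andP: (IH i).
- by [].
- move=> p a b q /andP[p0 p1] _ /andP[a0 a1] _ /andP[b0 b1].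
  apply/andP; split; nra.
Qed.

Lemma hit_prob_ge0 {n} {E : 'I_n -> R} {B A q} : (forall i, 0 <= E i) ->
  uses_at_most A q -> 0 <= hit_prob E B A.
Proof.
move=> E0; elim=> {A q} /=.
- by [].
- by move=> k q _ IH; apply: sumr_ge0 => i _; apply: mulr_ge0 => //; case: (B i).
- by move=> j k q _ IH; case: (B j).
- move=> p a b q /andP[p0 p1] _ a0 _ b0; nra.
Qed.

(* Coupling: runs under [D] and under [E] coincide until one of them touches [B]. *)
Lemma acc_prob_dist_le_hit_prob {n} {D E : 'I_n -> R} {B : pred 'I_n} {A q} :
  is_distr D -> is_distr E ->
  (forall i, ~~ B i -> D i = E i) ->
  \sum_(i | B i) D i = \sum_(i | B i) E i ->
  (forall j, ~~ B j -> cdf D j = cdf E j) ->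
  uses_at_most A q -> `|acc_prob D A - acc_prob E A| <= hit_prob E B A.
Proof.
move=> HD HE DE SB CE; have [D0 _] := HD; have [E0 _] := HE.
elim=> {A q} /=.
- by move=> b q; rewrite subrr normr0.
- move=> k q Hk IH.
  rewrite (bigID B) [X in _ - X](bigID B) [in leRHS](bigID B) /=.
  set x := \sum_(i < n | B i) D i * _; set y := \sum_(i < n | B i) E i * _.
  set u := \sum_(i < n | ~~ B i) D i * _; set v := \sum_(i < n | ~~ B i) E i * _.
  rewrite [X in _ <= X + _](eq_bigr E) => [|i ->]; last by rewrite mulr1.
  rewrite [X in _ <= _ + X](eq_bigr (fun i => E i * hit_prob E B (k i))); last first.
    by move=> i /negbTE ->.
  have mass_le (F : 'I_n -> R) : is_distr F ->
      0 <= \sum_(i < n | B i) F i * acc_prob F (k i) <= \sum_(i < n | B i) F i.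
    move=> HF; have acc01 i := acc_prob_ge0_le1 HF (Hk i).
    apply/andP; split.
      by apply: sumr_ge0 => i _; apply: mulr_ge0; [exact: HF.1 | case/andP: (acc01 i)].
    apply: ler_sum => i _; rewrite -[leRHS]mulr1.
    by apply: ler_wpM2l; [exact: HF.1 | case/andP: (acc01 i)].
  have /andP[x0 x1] := mass_le D HD; have /andP[y0 y1] := mass_le E HE.
  rewrite -/x -/y SB in x0 x1 y0 y1 *.
  have huv : `|u - v| <= \sum_(i < n | ~~ B i) E i * hit_prob E B (k i).
    rewrite /u /v -sumrB; apply: le_trans (ler_norm_sum _ _ _) _.
    apply: ler_sum => i Bi; rewrite DE // -mulrBr normrM ger0_norm //.
    by apply: ler_wpM2l => //; apply: IH.
  rewrite opprD addrACA; apply: le_trans (ler_normD _ _) _.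
  apply: lerD => //; rewrite ler_norml; apply/andP; split; lra.
- move=> j k q Hk IH; case Bj: (B j).
    case/andP: (acc_prob_ge0_le1 HD (Hk (cdf D j))) => ? ?.
    case/andP: (acc_prob_ge0_le1 HE (Hk (cdf E j))) => ? ?.
    rewrite ler_norml; apply/andP; split; lra.
  by rewrite CE ?Bj.
- move=> p a b q /andP[p0 p1] _ Ha _ Hb.
  have p1' : 0 <= 1 - p by lra.
  rewrite opprD addrACA -!mulrBr; apply: le_trans (ler_normD _ _) _.
  rewrite !normrM (ger0_norm p0) (ger0_norm p1').
  by apply: lerD; apply: ler_wpM2l.
Qed.

Lemma sum_if_unique_le (I : finType) (B : pred I) (x : I -> R) :
  (forall r, 0 <= x r) -> (forall r1 r2, B r1 -> B r2 -> r1 = r2) ->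
  \sum_r (if B r then 1 else x r) <= 1 + \sum_r x r.
Proof.
move=> x0 Bu; case: (pickP B) => [r0 Br0|noB]; last first.
  by rewrite (eq_bigr x) => [|r _]; [lra | rewrite noB].
rewrite (bigD1 r0) //= Br0 [in X in _ <= 1 + X](bigD1 r0) //= lerD2l.
rewrite -[leLHS]add0r lerD // (eq_bigr x) // => r rr0.
by case: ifP => // Br; move: rr0; rewrite (Bu _ _ Br Br0) eqxx.
Qed.

(* Each oracle call lands in at most one of the disjoint sets [B r]. *)
Lemma sum_hit_prob_le {n} {I : finType} {E : 'I_n -> R} {B : I -> pred 'I_n} {A q} :
  is_distr E -> (forall i r1 r2, B r1 i -> B r2 i -> r1 = r2) ->
  uses_at_most A q -> \sum_r hit_prob E (B r) A <= q%:R.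
Proof.
case=> E0 E1 Bu; elim=> {A q} /=.
- by move=> b q; rewrite big1.
- move=> k q Hk IH; rewrite exchange_big /=.
  apply: (@le_trans _ _ (\sum_(i < n) E i * (1 + q%:R))).
    apply: ler_sum => i _; rewrite -mulr_sumr; apply: ler_wpM2l => //.
    apply: le_trans (@sum_if_unique_le _ (B^~ i) (fun r => hit_prob E (B r) (k i)) _ _) _.
    - by move=> r; apply: hit_prob_ge0 (Hk i).
    - by move=> r1 r2; apply: Bu.
    by rewrite lerD2l.
  by rewrite -mulr_suml E1 mul1r -natr1 addrC.
- move=> j k q Hk IH.
  apply: le_trans (@sum_if_unique_le _ (B^~ j) (fun r => hit_prob E (B r) (k (cdf E j))) _ _) _.
  - by move=> r; apply: hit_prob_ge0 (Hk _).
  - by move=> r1 r2; apply: Bu.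
  by rewrite -natr1 [_ + 1]addrC lerD2l; apply: IH.
- move=> p a b q /andP[p0 p1] _ Ha _ Hb.
  rewrite big_split /= -!mulr_sumr.
  have := ler_wpM2l p0 Ha; have p1' : 0 <= 1 - p by lra.
  have := ler_wpM2l p1' Hb; lra.
Qed.

End Coupling.

Arguments hit_prob {R n}.

Section Blocks.
Variable R : realType.

Lemma cdf_eq_off n (D E : 'I_n -> R) (B : pred 'I_n) (j : 'I_n) :
  (forall i, ~~ B i -> D i = E i) ->
  \sum_(i | B i) D i = \sum_(i | B i) E i ->
  {in B, forall i : 'I_n, (i <= j)%N} \/ {in B, forall i : 'I_n, (j < i)%N} ->
  cdf D j = cdf E j.
Proof.
move=> DE SB [Ble|Bgt]; rewrite /cdf.
- rewrite (bigID B) [in RHS](bigID B) /=.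
  have sumB F : \sum_(i < n | (i <= j)%N && B i) F i = \sum_(i | B i) F i :> R.
    by apply: eq_bigl => i; case: (boolP (B i)) => Bi; rewrite ?andbF ?andbT ?Ble.
  rewrite !sumB SB; congr (_ + _); apply: eq_bigr => i /andP[_]; exact: DE.
- apply: eq_bigr => i ij; apply: DE; apply/negP => /Bgt; lia.
Qed.

Lemma sum_itv_const n m p (c : R) : (m <= p <= n)%N ->
  \sum_(i < n) (if (m <= i < p)%N then c else 0) = (p - m)%:R * c.
Proof.
case/andP=> mp pn.
rewrite -(big_mkord xpredT (fun i => if (m <= i < p)%N then c else 0)).
rewrite (@big_cat_nat _ _ _ m) //=; last exact: leq_trans pn.
rewrite (@big_cat_nat _ _ _ p m n) //= big_nat_cond big1 ?add0r; last first.
  by move=> i /andP[/andP[_ im] _]; rewrite leqNgt im.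
rewrite [X in _ + X]big_nat_cond [X in _ + X]big1 ?addr0; last first.
  by move=> i /andP[/andP[pi _] _]; rewrite ltnNge pi andbF.
rewrite (eq_big_nat _ _ (F2 := fun _ => c)); last by move=> i ->.
by rewrite sumr_const_nat mulr_natl.
Qed.

Lemma uniform_distr {n} : (0 < n)%N -> is_distr (@uniform R n).
Proof.
move=> n0; split=> [i|]; first by rewrite invr_ge0 ler0n.
rewrite sumr_const card_ord -[_ *+ n]mulr_natl divff //.
by rewrite pnatr_eq0 -lt0n.
Qed.

Definition block n (a L : nat) : pred 'I_n := fun i => (a <= i < a + L + L)%N.

Definition itv_mass n (m p : nat) (i : 'I_n) : R := if (m <= i < p)%N then n%:R^-1 else 0.

Definition block_shift n (a L : nat) (i : 'I_n) : R :=
  itv_mass n (a + L) (a + L + L) i - itv_mass n a (a + L) i.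

(* [perturbed n a L] is [0] on [a, a + L) and [2/n] on [a + L, a + 2L). *)
Definition perturbed n (a L : nat) (i : 'I_n) : R := @uniform R n i + block_shift n a L i.

Lemma sum_itv_mass n m p : (m <= p <= n)%N -> \sum_i itv_mass n m p i = (p - m)%:R / n%:R.
Proof. exact: sum_itv_const. Qed.

Section Perturbed.
Context {n a L : nat}.

Lemma block_shift_off i : ~~ block n a L i -> block_shift n a L i = 0.
Proof.
rewrite /block /block_shift /itv_mass => Bi.
by case: ifP; case: ifP => h1 h2; rewrite ?subrr ?subr0 //; move: Bi h1 h2; lia.
Qed.

Lemma perturbed_off i : ~~ block n a L i -> perturbed n a L i = @uniform R n i.
Proof. by move=> Bi; rewrite /perturbed block_shift_off ?addr0. Qed.

Hypotheses (n_gt0 : (0 < n)%N) (block_in : (a + L + L <= n)%N).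

Lemma sum_block_shift : \sum_i block_shift n a L i = 0.
Proof.
rewrite /block_shift sumrB !sum_itv_mass; try (apply/andP; split; lia).
have -> : (a + L + L - (a + L) = a + L - a)%N by lia.
by rewrite subrr.
Qed.

Lemma sum_abs_block_shift : \sum_i `|block_shift n a L i| = (L + L)%:R / n%:R.
Proof.
transitivity (\sum_i (itv_mass n (a + L) (a + L + L) i + itv_mass n a (a + L) i)).
  apply: eq_bigr => i _; rewrite /block_shift /itv_mass.
  have n0 : 0 <= n%:R^-1 :> R by rewrite invr_ge0 ler0n.
  by case: ifP; case: ifP => h1 h2; rewrite ?subr0 ?sub0r ?subrr ?normrN ?addr0 ?add0r
       ?normr0 ?ger0_norm //; move: h1 h2; lia.
rewrite big_split /= !sum_itv_mass; try (apply/andP; split; lia).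
by rewrite -mulrDl -natrD; congr (_%:R / _); lia.
Qed.

Lemma perturbed_distr : is_distr (perturbed n a L).
Proof.
split.
- move=> i; rewrite /perturbed /uniform /block_shift /itv_mass.
  have : 0 <= n%:R^-1 :> R by rewrite invr_ge0 ler0n.
  by case: ifP; case: ifP => _ _; lra.
- rewrite big_split /= sum_block_shift addr0; exact: (uniform_distr n_gt0).2.
Qed.

Lemma perturbed_block_mass :
  \sum_(i | block n a L i) perturbed n a L i = \sum_(i | block n a L i) @uniform R n i.
Proof.
rewrite big_split /=; have := sum_block_shift.
rewrite (bigID (block n a L)) /= [X in _ + X]big1 => [| i]; last exact: block_shift_off.
by rewrite !addr0 => ->; rewrite addr0.
Qed.

Lemma dTV_perturbed : dTV (perturbed n a L) (@uniform R n) = L%:R / n%:R.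
Proof.
rewrite /dTV (eq_bigr (fun i => `|block_shift n a L i|)); last first.
  by move=> i _; rewrite /perturbed addrAC subrr add0r.
by rewrite sum_abs_block_shift natrD; field; rewrite pnatr_eq0 -lt0n.
Qed.

Lemma cdf_perturbed_off j : ~~ block n a L j -> cdf (perturbed n a L) j = cdf (@uniform R n) j.
Proof.
move=> Bj; apply: cdf_eq_off; [exact: perturbed_off | exact: perturbed_block_mass |].
by move: Bj; rewrite /block; case: (ltnP j a) => ja Bj; [right | left] => i /andP[]; lia.
Qed.

End Perturbed.

End Blocks.

Section LowerBound.
Variable R : realType.

Lemma exists_le_mean (I : finType) (f : I -> R) (s : R) :
  (0 < #|I|)%N -> \sum_i f i <= s -> exists i, f i <= s / #|I|%:R.
Proof.
move=> I0 sum_le; case: (pickP (fun i => f i <= s / #|I|%:R)) => [i fi | none].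
  by exists i.
have [i0 _] : exists i, i \in I by apply/card_gt0P.
suff : \sum_(i : I) (s / #|I|%:R) < \sum_i f i.
  by rewrite sumr_const -[_ *+ _]mulr_natl mulrC divfK ?pnatr_eq0 -?lt0n // ltNge sum_le.
apply: ltr_sum; first by apply/hasP; exists i0; rewrite ?mem_index_enum.
by move=> i _; rewrite ltNge none.
Qed.

Lemma blocks_disjoint n M L (i : 'I_n) (r1 r2 : 'I_M) :
  block n (r1 * (L + L)) L i -> block n (r2 * (L + L)) L i -> r1 = r2.
Proof.
have le r r' : (r * (L + L) <= i)%N -> (i < r' * (L + L) + L + L)%N -> (r <= r')%N.
  move=> h h'; have : (r * (L + L) < r'.+1 * (L + L))%N by rewrite mulSn; lia.
  by rewrite ltn_mul2r ltnS => /andP[].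
move=> /andP[h1 h2] /andP[h3 h4]; apply: val_inj; apply/eqP.
by rewrite eqn_leq (le _ _ h1 h4) (le _ _ h3 h2).
Qed.

Lemma tester_hit_prob_block_ge {n a L} {eps : R} {A : alg R n} {q} :
  (0 < L)%N -> (a + L + L <= n)%N -> eps * n%:R <= L%:R ->
  uses_at_most A q -> uniformity_tester eps A ->
  1 / 3 <= hit_prob (@uniform R n) (block n a L) A.
Proof.
move=> L0 aLn epsL HA HT.
have n0 : (0 < n)%N by lia.
have HU := uniform_distr R n0; have HD := perturbed_distr R n0 aLn.
have accU : 2 / 3 <= acc_prob (@uniform R n) A by apply: (HT _ HU).1.
have accD : acc_prob (perturbed R n a L) A <= 1 / 3.
  by apply: (HT _ HD).2; rewrite dTV_perturbed // ler_pdivlMr ?ltr0n.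
have := acc_prob_dist_le_hit_prob R HD HU (@perturbed_off R n a L)
  (perturbed_block_mass R n0 aLn) (cdf_perturbed_off R n0 aLn) HA.
rewrite ler_norml => /andP[? _]; lra.
Qed.

Lemma tester_block_count_le {n L} M {eps : R} {A : alg R n} {q} :
  (0 < L)%N -> (M * (L + L) <= n)%N -> eps * n%:R <= L%:R ->
  uses_at_most A q -> uniformity_tester eps A -> M%:R <= 3 * q%:R :> R.
Proof.
case: M => [|M] L0 MLn epsL HA HT; first by rewrite mulr_ge0 ?ler0n.
pose U := @uniform R n; pose B (r : 'I_M.+1) := block n (r * (L + L)) L.
have HU : is_distr U by apply: uniform_distr; lia.
have [r hit_le] : exists r, hit_prob U (B r) A <= q%:R / #|'I_M.+1|%:R.
  by apply: exists_le_mean; rewrite ?card_ord // (sum_hit_prob_le R HU (@blocks_disjoint _ _ _)).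
have rLn : (r * (L + L) + L + L <= n)%N.
  by apply: leq_trans MLn; rewrite -addnA addnC -mulSn leq_mul2r ltn_ord orbT.
have := le_trans (tester_hit_prob_block_ge L0 rLn epsL HA HT) hit_le.
by rewrite card_ord ler_pdivlMr ?ltr0n //; lra.
Qed.

Lemma block_count_ge {n L} {eps : R} : (0 < L)%N -> 0 < eps -> eps <= 1 / 8 ->
  1 <= eps * n%:R -> L%:R <= 2 * eps * n%:R -> 1 <= 8 * eps * (n %/ (L + L))%N%:R.
Proof.
move=> L0 eps_gt0 eps_le eps_n L_le; set M := (n %/ (L + L))%N.
have n_lt : n%:R < (M%:R + 1) * (L%:R + L%:R) :> R.
  by rewrite natr1 -natrD -natrM ltr_nat ltn_ceil // addn_gt0 L0.
have M_ge0 : 0 <= M%:R :> R by [].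
have : n%:R * 1 < n%:R * (4 * eps * (M%:R + 1)) by nra.
rewrite ltr_pM2l; [lra | nra].
Qed.

End LowerBound.

Theorem theorem4 (R : realType) :
  exists c eps0 K : R,
    [/\ 0 < c, 0 < eps0, eps0 <= 1 & 0 < K] /\
    forall (n : nat) (eps : R) (q : nat) (A : alg R n),
      0 < eps -> eps <= eps0 -> K / eps <= n%:R ->
      uses_at_most A q -> uniformity_tester eps A ->
      c / eps <= q%:R.
Proof.
exists (1 / 24), (1 / 8), 1; split; first by split; lra.
move=> n eps q A eps_gt0 eps_le K_le HA HT.
have eps_n : 1 <= eps * n%:R by move: K_le; rewrite ler_pdivrMr // mulrC.
pose L := (Num.truncn (eps * n%:R)).+1.
have L_gt : eps * n%:R < L%:R := truncnS_gt _.
have L_le : L%:R <= 2 * eps * n%:R.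
  suff : (Num.truncn (eps * n%:R))%:R <= eps * n%:R by rewrite /L -natr1; lra.
  by rewrite truncn_le mulr_ge0 ?ler0n ?ltW.
have M_le := tester_block_count_le R (L := L) (n %/ (L + L))%N isT (leq_divM _ _)
  (ltW L_gt) HA HT.
have M_ge := block_count_ge R (L := L) isT eps_gt0 eps_le eps_n L_le.
rewrite ler_pdivrMr //; nra.
Qed.
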